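(* For $i=1,2$ let $L_i=\widehat{\sigma_1^{x_i}\sigma_2^{y_i}[1,3]^{z_i}}$ with integers $x_i,y_i,z_i\ge 0$ and $z_i\equiv 1\pmod 3$. Let $L=\widehat{\sigma_1^{x}\sigma_2^{y}[1,3]^{z}}$ with integers $x,y,z\ge 0$ and $z\equiv 0\pmod 3$. If $V_{L_1}=V_{L_2}$, then $z_1=z_2$ and $x_1+y_1=x_2+y_2$. If $z_1=z_2$ and $x_1+y_1=x_2+y_2$, then $L_1=L_2$. If $V_{L_1}=V_L$, then $\{x,y\}=\{1,1+x_1+y_1\}$ and $z+1=z_1$. If $\{x,y\}=\{1,1+x_1+y_1\}$ and $z+1=z_1$, then $L_1=L$. Hence $L_1$ is the closure of $\sigma_1^{1+x_1+y_1}\sigma_2[1,3]^{z_1-1}$.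
   Context: $B_3$ is the 3-strand braid group with generators $\sigma_1,\sigma_2$; $[1,3]=\sigma_1\sigma_2$; $\widehat\beta$ is the closure. $V_L$ is the Jones polynomial (unknot $=1$, $t^{-1}V_{L_+}-tV_{L_-}=(t^{1/2}-t^{-1/2})V_{L_0}$, $\sigma_i$ a positive crossing). *)

From HB Require Import structures.
From mathcomp Require Import all_boot all_order all_algebra fraction.
Set Implicit Arguments. Unset Strict Implicit. Unset Printing Implicit Defensive.
Import Order.TTheory GRing.Theory Num.Theory.

(* A braid letter (i, b) denotes sigma_i (b = true) or sigma_i^{-1} (b = false),
   with generator indices i >= 1 (sigma_i crosses strands i and i+1). *)
Definition letter := (nat * bool)%type.
Definition bword := seq letter.

Definition wf_word (n : nat) (w : bword) : bool :=
  all (fun l : letter => (0 < l.1) && (l.1 < n)) w.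

Inductive braid_eq : bword -> bword -> Prop :=
| beq_refl w : braid_eq w w
| beq_sym u w : braid_eq u w -> braid_eq w u
| beq_trans u v w : braid_eq u v -> braid_eq v w -> braid_eq u w
| beq_ctx a b u w : braid_eq u w -> braid_eq (a ++ u ++ b) (a ++ w ++ b)
| beq_inv i b : braid_eq [:: (i, b); (i, ~~ b)] [::]
| beq_far i j b c : (i.+1 < j)%N -> braid_eq [:: (i, b); (j, c)] [:: (j, c); (i, b)]
| beq_braid i : braid_eq [:: (i, true); (i.+1, true); (i, true)]
                         [:: (i.+1, true); (i, true); (i.+1, true)].

(* Isotopy of closed braids, via Markov moves (conjugation, stabilization). *)
Inductive link_eq : nat * bword -> nat * bword -> Prop :=
| leq_braid n u w : wf_word n u -> wf_word n w -> braid_eq u w ->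
    link_eq (n, u) (n, w)
| leq_conj n u w : wf_word n u -> wf_word n w ->
    link_eq (n, u ++ w) (n, w ++ u)
| leq_stab n w b : (0 < n)%N -> wf_word n w ->
    link_eq (n, w) (n.+1, rcons w (n, b))
| leq_sym p q : link_eq p q -> link_eq q p
| leq_trans p q r : link_eq p q -> link_eq q r -> link_eq p r.

(* Coefficients: the field of fractions of Z[s], with s = t^{1/2}. *)
Definition LPoly := {fraction {poly int}}.
Definition s : LPoly := tofrac ('X : {poly int}).

Local Open Scope ring_scope.

(* V is the Jones polynomial on closed braids: invariant under link
   equivalence, unknot = 1, and skein relation at any braid crossing:
   t^{-1} V(L+) - t V(L-) = (t^{1/2} - t^{-1/2}) V(L0). *)
Definition jones_axioms (V : nat -> bword -> LPoly) : Prop :=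
  [/\ (forall n w m u, link_eq (n, w) (m, u) -> V n w = V m u),
      V 1%N [::] = 1 &
      (forall n w1 w2 i, wf_word n (w1 ++ w2) -> (0 < i < n)%N ->
         s ^- 2 * V n (w1 ++ (i, true) :: w2) - s ^+ 2 * V n (w1 ++ (i, false) :: w2)
         = (s - s^-1) * V n (w1 ++ w2))].

(* sigma_1^x sigma_2^y [1,3]^z in B_3, [1,3] = sigma_1 sigma_2 *)
Definition bw3 (x y z : nat) : bword :=
  nseq x (1%N, true) ++ nseq y (2%N, true) ++ flatten (nseq z [:: (1%N, true); (2%N, true)]).

From Pilot Require Import Defs.
From HB Require Import structures.
From mathcomp Require Import all_boot all_order all_algebra fraction.
From mathcomp Require Import ring zify.
Set Implicit Arguments. Unset Strict Implicit. Unset Printing Implicit Defensive.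
Import Order.TTheory GRing.Theory Num.Theory.

(* Write positive words in B_3 as boolean sequences, [true] for sigma_1 and
   [false] for sigma_2, and t = s^2.  With [burau s] equal to -s times the
   reduced Burau matrices at t, the function
     jtrace s w = (s^4 + 1) (-s)^|w| + s^2 tr (burau s w)
   obeys the same quadratic relation as s^2 V (every Burau generator has
   eigenvalues s^3 and -s, while the skein relation and sigma_i sigma_i^-1 = 1
   give V(u g g v) = (s^3 - s) V(u g v) + s^4 V(u v)), respects the braid
   relation, and agrees with s^2 V on six short words; hence s^2 V = jtrace on
   all positive words.  Evaluating at s = 2 turns the closure of
   sigma_1^x sigma_2^y [1,3]^(3k) into the integer
     (-2)^(x+y) 64^k (425 + 4 64^k c(x, y)) / 25,
   and since 425 + 4 t is odd, comparing 2-adic valuations recovers k and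
   x + y, and then the valuation of c(x, y) pins down {x, y}.  Conversely,
   [1,3]^3 is central, which lets sigma_1^x sigma_2^y [1,3]^(3k+1) be moved
   by braid relations and conjugation to sigma_1^(x+y+1) sigma_2 [1,3]^(3k). *)

Definition gen3 (g : bool) : letter := ((if g then 1 else 2), true).
Definition pword (w : seq bool) : bword := map gen3 w.

Lemma pword_cat u v : pword (u ++ v) = pword u ++ pword v.
Proof. exact: map_cat. Qed.

Lemma wf_pword w : wf_word 3 (pword w).
Proof. by elim: w => [|[] w IH]. Qed.

Lemma wf_word_cat n u v : wf_word n (u ++ v) = wf_word n u && wf_word n v.
Proof. exact: all_cat. Qed.

Lemma wf_word_cons n l w : wf_word n (l :: w) = (0 < l.1 < n) && wf_word n w.
Proof. by []. Qed.

Definition pos3 (x y z : nat) : seq bool :=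
  nseq x true ++ nseq y false ++ flatten (nseq z [:: true; false]).

Lemma bw3_pword x y z : bw3 x y z = pword (pos3 x y z).
Proof.
rewrite /bw3 /pword !map_cat !map_nseq; congr (_ ++ (_ ++ _)).
by elim: z => [|z IH] //=; rewrite IH.
Qed.

Lemma size_pos3 x y z : size (pos3 x y z) = x + y + 2 * z.
Proof.
rewrite !size_cat !size_nseq addnA; congr (_ + _).
by elim: z => [|z IH] //=; rewrite IH mulnS.
Qed.

Definition Delta2 := [:: true; false; true; false; true; false].
Definition twist k := flatten (nseq (3 * k) [:: true; false]).

Lemma twistS k : twist k.+1 = Delta2 ++ twist k.
Proof. by rewrite /twist mulnS. Qed.

Lemma pos3_twist x y k : pos3 x y (3 * k) = nseq x true ++ nseq y false ++ twist k.
Proof. by []. Qed.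

Lemma pos3_twistS x y k :
  pos3 x y (3 * k).+1 = nseq x true ++ nseq y false ++ [:: true, false & twist k].
Proof. by []. Qed.

Lemma pos3_shift n k : pos3 n 0 (3 * k).+1 = pos3 n.+1 1 (3 * k).
Proof. by rewrite pos3_twistS pos3_twist -addn1 nseqD -catA. Qed.

Lemma exists_mod3 z r : z %% 3 = r -> exists k, z = 3 * k + r.
Proof. by move=> <-; exists (z %/ 3); rewrite mulnC -divn_eq. Qed.

Definition braid3_eq (u w : seq bool) := braid_eq (pword u) (pword w).
Definition link3_eq (u w : seq bool) := link_eq (3, pword u) (3, pword w).

Lemma braid3_trans v u w : braid3_eq u v -> braid3_eq v w -> braid3_eq u w.
Proof. exact: beq_trans. Qed.
Arguments braid3_trans v {u w}.

Lemma braid3_sym u w : braid3_eq u w -> braid3_eq w u.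
Proof. exact: beq_sym. Qed.

Lemma braid3_ctx a b u w : braid3_eq u w -> braid3_eq (a ++ u ++ b) (a ++ w ++ b).
Proof. by rewrite /braid3_eq !pword_cat; apply: beq_ctx. Qed.
Arguments braid3_ctx a b {u w}.

Lemma braid3_catl a u w : braid3_eq u w -> braid3_eq (a ++ u) (a ++ w).
Proof. by move/(braid3_ctx a [::]); rewrite !cats0. Qed.
Arguments braid3_catl a {u w}.

Lemma braid3_relation : braid3_eq [:: false; true; false] [:: true; false; true].
Proof. exact/beq_sym/beq_braid. Qed.

Lemma link3_trans v u w : link3_eq u v -> link3_eq v w -> link3_eq u w.
Proof. exact: Defs.leq_trans. Qed.
Arguments link3_trans v {u w}.

Lemma link3_sym u w : link3_eq u w -> link3_eq w u.
Proof. exact: leq_sym. Qed.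

Lemma link3_of_braid3 u w : braid3_eq u w -> link3_eq u w.
Proof. exact: leq_braid (wf_pword u) (wf_pword w). Qed.

Lemma link3_conj u w : link3_eq (u ++ w) (w ++ u).
Proof. by rewrite /link3_eq !pword_cat; apply: leq_conj; apply: wf_pword. Qed.

Lemma braid3_Delta2_comm g : braid3_eq (g :: Delta2) (Delta2 ++ [:: g]).
Proof.
case: g.
- apply: (braid3_trans [:: true; false; true; false; false; true; false]).
    exact: (braid3_ctx [:: true] [:: false; true; false] (braid3_sym braid3_relation)).
  exact: (braid3_ctx [:: true; false; true; false] [::] braid3_relation).
- apply: (braid3_trans [:: true; false; true; true; false; true; false]).
    exact: (braid3_ctx [::] [:: true; false; true; false] braid3_relation).
  exact: (braid3_ctx [:: true; false; true] [:: false] (braid3_sym braid3_relation)).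
Qed.

Lemma braid3_twist_comm g k : braid3_eq (g :: twist k) (twist k ++ [:: g]).
Proof.
elim: k => [|k IH]; first exact: beq_refl.
rewrite twistS; apply: (braid3_trans ((Delta2 ++ [:: g]) ++ twist k)).
  exact: (braid3_ctx [::] (twist k) (braid3_Delta2_comm g)).
by rewrite -!catA; apply: braid3_catl.
Qed.

Lemma braid3_nseq_twist g n k : braid3_eq (nseq n g ++ twist k) (twist k ++ nseq n g).
Proof.
elim: n => [|n IH]; first by rewrite cats0; apply: beq_refl.
apply: (braid3_trans (g :: twist k ++ nseq n g)); first exact: (braid3_catl [:: g] IH).
rewrite -[_ ++ nseq n.+1 g]/(twist k ++ [:: g] ++ nseq n g) catA.
exact: (braid3_ctx [::] _ (braid3_twist_comm g k)).
Qed.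

Lemma braid3_nseq_slide n :
  braid3_eq (nseq n false ++ [:: true; false]) ([:: true; false] ++ nseq n true).
Proof.
elim: n => [|n IH]; first exact: beq_refl.
apply: (braid3_trans (false :: [:: true; false] ++ nseq n true)).
  exact: (braid3_catl [:: false] IH).
exact: (braid3_ctx [::] (nseq n true) braid3_relation).
Qed.

Lemma link3_pos3_merge x y k : link3_eq (pos3 x y (3 * k).+1) (pos3 (x + y) 0 (3 * k).+1).
Proof.
rewrite !pos3_twistS.
apply: (link3_trans (nseq x true ++ [:: true; false] ++ nseq y true ++ twist k)).
  apply/link3_of_braid3/braid3_catl; rewrite -[true :: _]/([:: true; false] ++ twist k) !catA.
  exact: (braid3_ctx [::] (twist k) (braid3_nseq_slide y)).
apply: (link3_trans ((nseq x true ++ [:: true; false] ++ twist k) ++ nseq y true)).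
  by apply/link3_of_braid3; rewrite -!catA; do 2!apply: braid3_catl; apply: braid3_nseq_twist.
apply: (link3_trans _ (link3_conj _ _)); rewrite addnC nseqD -!catA.
exact/link3_of_braid3/beq_refl.
Qed.

Lemma link3_pos3_flip n k : link3_eq (pos3 0 n (3 * k).+1) (pos3 1 n.+1 (3 * k)).
Proof.
apply: (link3_trans ([:: true, false & twist k] ++ nseq n false)).
  exact: (link3_conj (nseq n false)).
apply/link3_of_braid3/braid3_sym.
exact: (braid3_catl [:: true; false] (braid3_nseq_twist false n k)).
Qed.

Lemma link3_pos3_normal x y k : link3_eq (pos3 x y (3 * k).+1) (pos3 (x + y).+1 1 (3 * k)).
Proof. by rewrite -pos3_shift; apply: link3_pos3_merge. Qed.

Lemma link3_pos3_swap n k : link3_eq (pos3 n.+1 1 (3 * k)) (pos3 1 n.+1 (3 * k)).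
Proof.
rewrite -pos3_shift; apply: (link3_trans (pos3 0 n (3 * k).+1)); last exact: link3_pos3_flip.
by apply: link3_sym; have := link3_pos3_merge 0 n k; rewrite add0n.
Qed.

Local Open Scope ring_scope.

Section BurauTrace.
Variable R : comNzRingType.

(* [(a, b, c, d)] is the 2x2 matrix [[a, b], [c, d]]. *)
Definition mx2 := (R * R * R * R)%type.

Definition mul2 (A B : mx2) : mx2 :=
  let: (a, b, c, d) := A in let: (e, f, g, h) := B in
  (a * e + b * g, a * f + b * h, c * e + d * g, c * f + d * h).

Definition one2 : mx2 := (1, 0, 0, 1).

Definition tr2 (A : mx2) : R := let: (a, _, _, d) := A in a + d.

Definition burau (a : R) (g : bool) : mx2 :=
  if g then (a ^+ 3, - a, 0, - a) else (- a, 0, - a ^+ 3, a ^+ 3).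

Fixpoint burau_word (a : R) (w : seq bool) : mx2 :=
  if w is g :: w' then mul2 (burau a g) (burau_word a w') else one2.

Definition jtrace (a : R) (w : seq bool) : R :=
  (a ^+ 4 + 1) * (- a) ^+ size w + a ^+ 2 * tr2 (burau_word a w).

Lemma mul2A : associative mul2.
Proof.
case=> [[[a b] c] d] [[[e f] g] h] [[[i j] k] l].
by rewrite /mul2; congr (_, _, _, _); ring.
Qed.

Lemma mul1_2 : left_id one2 mul2.
Proof. by case=> [[[a b] c] d]; rewrite /mul2 /one2; congr (_, _, _, _); ring. Qed.

Lemma burau_word_cat a u v :
  burau_word a (u ++ v) = mul2 (burau_word a u) (burau_word a v).
Proof. by elim: u => [|g u IH]; [rewrite mul1_2 | rewrite /= IH mul2A]. Qed.

Lemma jtrace_sq a u v g : jtrace a (u ++ g :: g :: v) =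
  (a ^+ 3 - a) * jtrace a (u ++ g :: v) + a ^+ 4 * jtrace a (u ++ v).
Proof.
rewrite /jtrace !burau_word_cat /= !size_cat /= !addnS !exprS.
case: (burau_word a u) => [[[p1 p2] p3] p4]; case: (burau_word a v) => [[[q1 q2] q3] q4].
by case: g; rewrite /mul2 /tr2 /=; ring.
Qed.

Lemma jtrace_braid a u v : jtrace a (u ++ [:: false; true; false] ++ v) =
  jtrace a (u ++ [:: true; false; true] ++ v).
Proof.
rewrite /jtrace !burau_word_cat /= !size_cat /=.
case: (burau_word a u) => [[[p1 p2] p3] p4]; case: (burau_word a v) => [[[q1 q2] q3] q4].
by rewrite /mul2 /tr2 /=; ring.
Qed.

End BurauTrace.

Definition map2 (R S : Type) (f : R -> S) (A : R * R * R * R) : S * S * S * S :=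
  let: (a, b, c, d) := A in (f a, f b, f c, f d).

Lemma map2_burau_word (R S : comNzRingType) (f : {rmorphism R -> S}) a w :
  map2 f (burau_word a w) = burau_word (f a) w.
Proof.
elim: w => [|g w /= <-]; first by rewrite /= rmorph0 rmorph1.
case: (burau_word a w) => [[[p1 p2] p3] p4].
by case: g; rewrite /= !(rmorphD, rmorphM, rmorphN, rmorphXn, rmorph0).
Qed.

Lemma rmorph_jtrace (R S : comNzRingType) (f : {rmorphism R -> S}) a w :
  f (jtrace a w) = jtrace (f a) w.
Proof.
rewrite /jtrace -map2_burau_word; case: (burau_word a w) => [[[p1 p2] p3] p4] /=.
by rewrite !(rmorphD, rmorphM, rmorphXn, rmorphN, rmorph1).
Qed.

Lemma jtrace_base (F : fieldType) (x : F) : x != 0 -> let d := - (x + x^-1) in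
  [/\ x ^+ 2 * d ^+ 2 = jtrace x [::], x ^+ 2 * d = jtrace x [:: true],
   x ^+ 2 * d = jtrace x [:: false], x ^+ 2 * 1 = jtrace x [:: true; false]
   & x ^+ 2 * 1 = jtrace x [:: false; true] /\
     x ^+ 2 * (x ^+ 4 * d + (x ^+ 3 - x)) = jtrace x [:: true; false; true]].
Proof. by move=> x0; rewrite /jtrace /=; split; try split; field. Qed.

Definition geom4 (n : nat) : int := \sum_(i < n) (-4) ^+ i.

Lemma geom4S n : geom4 n.+1 = 1 - 4 * geom4 n.
Proof.
rewrite /geom4 big_ord_recl expr0 -mulNr mulr_sumr.
by congr (_ + _); apply: eq_bigr => i _; rewrite lift0 exprS.
Qed.

Lemma geom4E n : 5 * geom4 n = 1 - (-4) ^+ n.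
Proof. by rewrite -opprB subrX1 /geom4; ring. Qed.

Lemma burau2_sig1_pow x : burau_word (2 : int) (nseq x true) =
  ((-2) ^+ x * (-4) ^+ x, (-2) ^+ x * geom4 x, 0, (-2) ^+ x).
Proof.
elim: x => [|x IH]; first by rewrite /= /geom4 big_ord0.
by rewrite /= IH geom4S /mul2 !exprS; congr (_, _, _, _); ring.
Qed.

Lemma burau2_sig2_pow y : burau_word (2 : int) (nseq y false) =
  ((-2) ^+ y, 0, (-2) ^+ y * (4 * geom4 y), (-2) ^+ y * (-4) ^+ y).
Proof.
elim: y => [|y IH]; first by rewrite /= /geom4 big_ord0.
by rewrite /= IH geom4S /mul2 !exprS; congr (_, _, _, _); ring.
Qed.

Lemma burau2_twist k :
  burau_word (2 : int) (twist k) = ((64 ^+ k) ^+ 2, 0, 0, (64 ^+ k) ^+ 2).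
Proof.
elim: k => [|k IH] //; rewrite twistS burau_word_cat IH /mul2 [64 ^+ k.+1]exprS /=.
by congr (_, _, _, _); ring.
Qed.

Definition cross (x y : nat) : int :=
  4 + 21 * (-4) ^+ x + 21 * (-4) ^+ y + 4 * (-4) ^+ x * (-4) ^+ y.

Lemma eq_by_sub (R : comNzRingType) (c e1 e2 L M : R) :
  e1 = e2 -> L - M = c * (e1 - e2) -> L = M.
Proof. by move=> -> /eqP; rewrite subrr mulr0 subr_eq0 => /eqP. Qed.

Lemma jtrace2_pos3 x y k : 25 * jtrace (2 : int) (pos3 x y (3 * k)) =
  (-2) ^+ (x + y) * 64 ^+ k * (425 + 4 * 64 ^+ k * cross x y).
Proof.
rewrite {1}pos3_twist /jtrace size_pos3 !burau_word_cat.
rewrite burau2_sig1_pow burau2_sig2_pow burau2_twist.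
rewrite mulnA exprD exprM (_ : (-2) ^+ (2 * 3) = 64 :> int) // !exprD /mul2 /tr2 /cross.
apply: (eq_by_sub (c := 16 * (-2) ^+ x * (-2) ^+ y * (64 ^+ k) ^+ 2)
                  (e1 := 25 * (geom4 x * geom4 y)) (e2 := (1 - (-4) ^+ x) * (1 - (-4) ^+ y))).
  by rewrite -!geom4E; ring.
ring.
Qed.

Lemma eq_pow2_odd a b (q1 q2 : int) :
  2 ^+ a * (2 * q1 + 1) = 2 ^+ b * (2 * q2 + 1) -> a = b.
Proof.
wlog le_ab : a b q1 q2 / (a <= b)%N => [hw E|].
  case: (leqP a b) => [ab | /ltnW ba]; first exact: hw ab E.
  exact/esym/(hw _ _ q2 q1 ba)/esym.
rewrite -(subnKC le_ab); move: (b - a)%N => [|c]; first by rewrite addn0.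
rewrite exprD exprS -!mulrA => /(mulfI (expf_neq0 _ (isT : (2 : int) != 0))).
move: (2 ^+ c * (2 * q2 + 1)) => t; lia.
Qed.

Lemma pow2_odd_neq0 v (q : int) : 2 ^+ v * (2 * q + 1) != 0.
Proof. by rewrite mulf_eq0 expf_eq0 /=; apply/eqP; lia. Qed.

Definition cross_val (v x y : nat) : Prop :=
  ((v = 0 /\ (x = 0 \/ y = 0)) \/ (v = 1 /\ x = 0 /\ y = 0) \/
   (v = 2 /\ ((x = 1 /\ y = 1) \/ (2 <= x /\ 2 <= y))) \/
   (v = 4 /\ ((x = 1 /\ 3 <= y) \/ (3 <= x /\ y = 1))))%N.

Lemma cross_2adic x y :
  (cross x y = 0 /\ ((x = 1 /\ y = 2) \/ (x = 2 /\ y = 1))%N) \/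
  exists v q, cross x y = 2 ^+ v * (2 * q + 1) /\ cross_val v x y.
Proof.
rewrite /cross_val /cross.
case: x => [|[|x]]; case: y => [|[|[|y]]].
- right; exists 1%N, 12; split; [rewrite !expr0; ring | lia].
- right; exists 0%N, (-38); split; [rewrite !expr0 !expr1; ring | lia].
- right; exists 0%N, 212; split; [rewrite !expr0 !exprS expr0; ring | lia].
- right; exists 0%N, (12 - 800 * (-4) ^+ y); split; [rewrite !expr0 !exprS; ring | lia].
- right; exists 0%N, (-38); split; [rewrite !expr0 !expr1; ring | lia].
- right; exists 2%N, (-13); split; [rewrite !expr1 !exprS expr0; ring | lia].
- left; split; [rewrite !exprS !expr0; ring | lia].
- right; exists 4%N, (-3 - 10 * (-4) ^+ y); split; [rewrite !exprS expr0; ring | lia].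
- right; exists 0%N, (12 + 200 * (-4) ^+ x); split; [rewrite !exprS !expr0; ring | lia].
- case: x => [|x].
  + left; split; [rewrite !exprS !expr0; ring | lia].
  + right; exists 4%N, (-3 - 10 * (-4) ^+ x); split; [rewrite !exprS !expr0; ring | lia].
- right; exists 2%N, (42 + 170 * (-4) ^+ x); split; [rewrite !exprS !expr0; ring | lia].
- right; exists 2%N, (42 * (-4) ^+ x - 168 * (-4) ^+ y - 512 * (-4) ^+ x * (-4) ^+ y).
  split; [rewrite !exprS !expr0; ring | lia].
Qed.

(* [425 + 4 t] is odd, so [(-2) ^+ n * 64 ^+ k] carries the whole 2-adic
   valuation and the sign. *)
Lemma twist_form_inj n k (c : int) n' k' (c' : int) :
  (-2) ^+ n * 64 ^+ k * (425 + 4 * 64 ^+ k * c) =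
  (-2) ^+ n' * 64 ^+ k' * (425 + 4 * 64 ^+ k' * c') ->
  (n + 6 * k = n' + 6 * k')%N /\ 64 ^+ k * c = 64 ^+ k' * c'.
Proof.
have pow2_sign j l (t : int) : (-2) ^+ j * 64 ^+ l * t = 2 ^+ (j + 6 * l) * ((-1) ^+ j * t).
  by rewrite exprD exprM -[-2]mulN1r exprMn; ring.
have odd_form j (t : int) : exists q, (-1) ^+ j * (425 + 4 * t) = 2 * q + 1.
  rewrite -signr_odd; case: (odd j); rewrite ?expr0 ?expr1.
  - by exists (-213 - 2 * t); ring.
  - by exists (212 + 2 * t); ring.
rewrite !pow2_sign -!mulrA => E.
have [q eq] := odd_form n (64 ^+ k * c); have [q' eq'] := odd_form n' (64 ^+ k' * c').
have ev : (n + 6 * k = n' + 6 * k')%N.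
  by apply: (eq_pow2_odd (q1 := q) (q2 := q')); rewrite -eq -eq'.
split=> //; move: E; rewrite ev => /(mulfI (expf_neq0 _ (isT : (2 : int) != 0))).
have -> : (-1) ^+ n = (-1) ^+ n' :> int.
  by rewrite -signr_odd -[in RHS]signr_odd; congr (_ ^+ _); move: ev; clear; lia.
by move/(mulfI (negbT (signr_eq0 _ _)))/addrI/(mulfI (isT : (4 : int) != 0)).
Qed.

Lemma jtrace2_pos3_eq x y k m k' : (0 < m)%N ->
  jtrace (2 : int) (pos3 x y (3 * k)) = jtrace 2 (pos3 m 1 (3 * k')) ->
  k = k' /\ ((x = 1 /\ y = m) \/ (x = m /\ y = 1))%N.
Proof.
move=> m0 /(congr1 ( *%R 25)); rewrite !jtrace2_pos3 => /twist_form_inj [ev ec].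
have e64 j : 64 ^+ j = 2 ^+ (6 * j) :> int by rewrite exprM.
case: (cross_2adic m 1) => [[c0 hm]|[v' [q' [c' hv']]]].
- move: ec; rewrite c0 mulr0 => /eqP; rewrite mulf_eq0 (negbTE (expf_neq0 _ _)) //= => /eqP cxy.
  case: (cross_2adic x y) => [[_ hxy]|[v [q [cxy' _]]]].
  + by move: ev hxy hm; clear; lia.
  + by move: (pow2_odd_neq0 v q); rewrite -cxy' cxy eqxx.
- case: (cross_2adic x y) => [[c0 hxy]|[v [q [c hv]]]].
  + move: (pow2_odd_neq0 (6 * k' + v') q').
    by rewrite exprD -mulrA -c' -e64 -ec c0 mulr0 eqxx.
  + move: ec; rewrite c c' !e64 !mulrA -!exprD => /eq_pow2_odd.
    by move: ev hv hv' m0; rewrite /cross_val; clear; lia.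
Qed.

Lemma s_neq0 : s != 0.
Proof. by rewrite tofrac_eq0 polyX_eq0. Qed.

Lemma s_sub_inv_neq0 : s - s^-1 != 0.
Proof.
rewrite subr_eq0; apply/eqP => /(congr1 (fun r => r * s)); rewrite mulVf ?s_neq0 //.
rewrite -expr2 -tofracXn -tofrac1 => /eqP; rewrite tofrac_eq => /eqP.
by move/(congr1 (horner^~ 0)); rewrite hornerXn hornerC expr0n.
Qed.

Lemma skein_pos (F : fieldType) (x A B C : F) : x != 0 ->
  x ^- 2 * A - x ^+ 2 * B = (x - x^-1) * C -> A = x ^+ 4 * B + (x ^+ 3 - x) * C.
Proof.
move=> x0 E; have -> : A = x ^+ 2 * (x ^- 2 * A) by rewrite mulrA mulfV ?mul1r ?expf_neq0.
have -> : x ^- 2 * A = x ^+ 2 * B + (x - x^-1) * C by rewrite -E; ring.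
by field.
Qed.

Lemma skein_zero (F : fieldType) (x A C : F) : x != 0 -> x - x^-1 != 0 ->
  x ^- 2 * A - x ^+ 2 * A = (x - x^-1) * C -> C = - (x + x^-1) * A.
Proof. by move=> x0 d0 E; apply: (mulfI d0); rewrite -E; field. Qed.

Section JonesPositive3.
Variable V : nat -> bword -> LPoly.
Hypothesis HV : jones_axioms V.

Lemma jones_link n w m u : link_eq (n, w) (m, u) -> V n w = V m u.
Proof. by case: HV => H _ _; apply: H. Qed.

Lemma jones_skein n w1 w2 i : wf_word n (w1 ++ w2) -> (0 < i < n)%N ->
  V n (w1 ++ (i, true) :: w2) =
  s ^+ 4 * V n (w1 ++ (i, false) :: w2) + (s ^+ 3 - s) * V n (w1 ++ w2).
Proof. by case: HV => _ _ H wf i0; apply: skein_pos s_neq0 (H _ _ _ _ wf i0). Qed.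

Lemma jones_skein_zero n w1 w2 i : wf_word n (w1 ++ w2) -> (0 < i < n)%N ->
  V n (w1 ++ (i, true) :: w2) = V n (w1 ++ (i, false) :: w2) ->
  V n (w1 ++ w2) = - (s + s^-1) * V n (w1 ++ (i, true) :: w2).
Proof.
case: HV => _ _ H wf i0 E; apply: skein_zero s_neq0 s_sub_inv_neq0 _.
by rewrite {2}E; apply: H.
Qed.

Local Notation delta := (- (s + s^-1)).

Lemma jones2_sig1 b : V 2 [:: (1%N, b)] = 1.
Proof. by case: HV => _ <- _; apply/esym/jones_link/(@leq_stab 1 [::]). Qed.

Lemma jones2_nil : V 2 [::] = delta.
Proof.
have := @jones_skein_zero 2 [::] [::] 1 isT isT.
by rewrite /= !jones2_sig1 mulr1 => ->.
Qed.

Lemma jones3_sig2 b : V 3 [:: (2%N, b)] = delta.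
Proof. by rewrite -jones2_nil; apply/esym/jones_link/(@leq_stab 2 [::]). Qed.

Lemma jones3_nil : V 3 [::] = delta ^+ 2.
Proof.
have := @jones_skein_zero 3 [::] [::] 2 isT isT.
by rewrite /= !jones3_sig2 expr2 => ->.
Qed.

Lemma jones3_sig1_sig2 b : V 3 [:: (1%N, true); (2%N, b)] = 1.
Proof. by rewrite -(jones2_sig1 true); apply/esym/jones_link/(@leq_stab 2 [:: _]). Qed.

Lemma jones3_sig1 : V 3 [:: (1%N, true)] = delta.
Proof.
have := @jones_skein_zero 3 [:: (1%N, true)] [::] 2 isT isT.
by rewrite /= !jones3_sig1_sig2 mulr1 => ->.
Qed.

Lemma jones3_sig2_sig1 : V 3 [:: (2%N, true); (1%N, true)] = 1.
Proof.
by rewrite -(jones3_sig1_sig2 true); apply/jones_link/(@leq_conj 3 [:: _] [:: _]).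
Qed.

Lemma jones3_sig121 :
  V 3 [:: (1%N, true); (2%N, true); (1%N, true)] = s ^+ 4 * delta + (s ^+ 3 - s).
Proof.
have -> : V 3 [:: (1%N, true); (2%N, true); (1%N, true)] = V 2 [:: (1%N, true); (1%N, true)].
  rewrite (jones_link (@leq_conj 3 [:: (1%N, true); (2%N, true)] [:: (1%N, true)] isT isT)).
  by apply/esym/jones_link/(@leq_stab 2 [:: _; _]).
rewrite (@jones_skein 2 [:: (1%N, true)] [::] 1) // jones2_sig1 mulr1.
have -> : V 2 [:: (1%N, true); (1%N, false)] = V 2 [::].
  exact/jones_link/leq_braid/(beq_inv 1 true).
by rewrite jones2_nil.
Qed.

Lemma jones_sq u v g : V 3 (pword (u ++ g :: g :: v)) =
  (s ^+ 3 - s) * V 3 (pword (u ++ g :: v)) + s ^+ 4 * V 3 (pword (u ++ v)).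
Proof.
have wf : wf_word 3 ((pword u ++ [:: gen3 g]) ++ pword v).
  by rewrite !wf_word_cat !wf_pword; case: g.
have g3 : (0 < (if g then 1 else 2) < 3)%N by case: (g).
have := jones_skein wf g3; rewrite -!catA !pword_cat /= => ->.
rewrite addrC; congr (_ + _ * _); apply: jones_link.
apply: leq_braid; last exact: beq_ctx (beq_inv _ _).
  by rewrite wf_word_cat !wf_word_cons !wf_pword; case: (g).
by rewrite -pword_cat wf_pword.
Qed.

Lemma jones_braid u v : V 3 (pword (u ++ [:: false; true; false] ++ v)) =
  V 3 (pword (u ++ [:: true; false; true] ++ v)).
Proof.
apply: jones_link (leq_braid (wf_pword _) (wf_pword _) _).
rewrite !pword_cat; exact: beq_ctx (beq_sym (beq_braid 1)).
Qed.

Definition agree w := s ^+ 2 * V 3 (pword w) = jtrace s w.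

Lemma agree_sq u v g : agree (u ++ g :: v) -> agree (u ++ v) -> agree (u ++ g :: g :: v).
Proof. by rewrite /agree jones_sq jtrace_sq => <- <-; ring. Qed.
Arguments agree_sq u {v g}.

Lemma agree_braid u v :
  agree (u ++ [:: true; false; true] ++ v) -> agree (u ++ [:: false; true; false] ++ v).
Proof. by rewrite /agree jones_braid jtrace_braid. Qed.
Arguments agree_braid u {v}.

(* Prepending a generator to one of these six prefixes gives another one
   followed by the word, or a word reducible to them by [agree_sq] and
   [agree_braid]. *)
Lemma agree_prefixes w :
  [/\ agree w, agree (true :: w), agree (false :: w), agree [:: true, false & w]
   & agree [:: false, true & w] /\ agree [:: true, false, true & w]].
Proof.
elim: w => [|[] w [H H1 H2 H12 [H21 H121]]].
- have [J J1 J2 J12 [J21 J121]] := jtrace_base s_neq0.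
  rewrite /agree /= jones3_nil jones3_sig1 jones3_sig2 jones3_sig1_sig2 jones3_sig2_sig1.
  rewrite jones3_sig121.
  by split; [exact: J | exact: J1 | exact: J2 | exact: J12 | split; [exact: J21 | exact: J121]].
- split; [exact: H1 | exact: (agree_sq [::] H1 H) | exact: H21 | exact: H121 | split].
  + exact: (agree_sq [:: false] H21 H2).
  + exact: (agree_sq [:: true; false] H121 H12).
- split; [exact: H2 | exact: H12 | exact: (agree_sq [::] H2 H) | | split].
  + exact: (agree_sq [:: true] H12 H1).
  + exact: (agree_braid [::] H121).
  + exact: (agree_braid [:: true] (agree_sq [::] H121 H21)).
Qed.

Lemma jones_jtrace w : s ^+ 2 * V 3 (pword w) = jtrace s w.
Proof. by case: (agree_prefixes w). Qed.

Lemma jones_eq_jtrace2 w1 w2 :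
  V 3 (pword w1) = V 3 (pword w2) -> jtrace (2 : int) w1 = jtrace 2 w2.
Proof.
move=> E; have : tofrac (jtrace ('X : {poly int}) w1) = tofrac (jtrace 'X w2).
  by rewrite !rmorph_jtrace -!jones_jtrace E.
move/eqP; rewrite tofrac_eq => /eqP /(congr1 (horner_eval (2 : int))).
by rewrite !rmorph_jtrace /= horner_evalE hornerX.
Qed.

Lemma jones_link3 u w : link3_eq u w -> V 3 (pword u) = V 3 (pword w).
Proof. exact: jones_link. Qed.

Lemma jones_pos3_eq x y k m k' : (0 < m)%N ->
  V 3 (pword (pos3 x y (3 * k))) = V 3 (pword (pos3 m 1 (3 * k'))) ->
  k = k' /\ ((x = 1 /\ y = m) \/ (x = m /\ y = 1))%N.
Proof. by move=> m0 /jones_eq_jtrace2; apply: jtrace2_pos3_eq. Qed.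

End JonesPositive3.

Local Close Scope ring_scope.

Theorem proposition2p20 (V : nat -> bword -> LPoly) (HV : jones_axioms V)
  (x1 y1 z1 x2 y2 z2 x y z : nat) :
  z1 %% 3 = 1 -> z2 %% 3 = 1 -> z %% 3 = 0 ->
  [/\ (V 3 (bw3 x1 y1 z1) = V 3 (bw3 x2 y2 z2) -> z1 = z2 /\ x1 + y1 = x2 + y2),
      (z1 = z2 /\ x1 + y1 = x2 + y2 -> link_eq (3, bw3 x1 y1 z1) (3, bw3 x2 y2 z2)),
      (V 3 (bw3 x1 y1 z1) = V 3 (bw3 x y z) ->
         ((x = 1 /\ y = (1 + x1 + y1)) \/ (x = (1 + x1 + y1) /\ y = 1)) /\ z + 1 = z1),
      ((((x = 1 /\ y = (1 + x1 + y1)) \/ (x = (1 + x1 + y1) /\ y = 1)) /\ z + 1 = z1) ->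
         link_eq (3, bw3 x1 y1 z1) (3, bw3 x y z)) &
      link_eq (3, bw3 x1 y1 z1) (3, bw3 (1 + x1 + y1) 1 (z1 - 1))].
Proof.
move=> /exists_mod3 [k1 ->] /exists_mod3 [k2 ->] /exists_mod3 [k ->].
rewrite !addn1 addn0 -addnA add1n !bw3_pword.
have N1 := link3_pos3_normal x1 y1 k1; have N2 := link3_pos3_normal x2 y2 k2.
split.
- rewrite (jones_link3 HV N1) (jones_link3 HV N2) => /(jones_pos3_eq HV).
  by move/(_ isT) => h; lia.
- case=> hz e; have ek : k2 = k1 by lia.
  by apply: (link3_trans _ N1); rewrite e -ek; apply: link3_sym.
- rewrite (jones_link3 HV N1) => /esym /(jones_pos3_eq HV).
  by move/(_ isT) => h; lia.
- case=> hxy hz; have -> : k = k1 by lia.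
  case: hxy => [[-> ->] | [-> ->] //].
  exact: link3_trans N1 (link3_pos3_swap _ _).
- by rewrite subn1.
Qed.
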